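(* Let $\sigma$ be a ruled submanifold of degree $d$. Then at every regular point $p$ of $\sigma$ the first normal space satisfies $d-1 \le \dim N^{1}_{p}\sigma \le d+1$.
   Context: Ruled submanifold: given an open interval $I$, a smooth unit-speed curve $\gamma \colon I \to \mathbb{R}^{m+n}$ and smooth vector fields $X_{1},\dotsc,X_{m-1}$ along $\gamma$ that are orthonormal at each $t$, define $\sigma(t,u^{1},\dotsc,u^{m-1})=\gamma(t)+\sum_{j=1}^{m-1}u^{j}X_{j}(t)$ on $I\times\mathbb{R}^{m-1}$. A point is regular if $d\sigma$ is injective there. Degree: for a subbundle $\mathcal{E}$ of $T\mathbb{R}^{m+n}|_{\gamma}$, define $\rho_{t}\colon\mathcal{E}_{t}\to\mathcal{E}_{t}^{\perp}$ by $v\mapsto\pi^{\perp}(dV/dt(t))$. Here $V$ is any smooth local section of $\mathcal{E}$ with $V(t)=v$, and $\pi^{\perp}$ is orthogonal projection onto $\mathcal{E}_{t}^{\perp}$. The degree of $\mathcal{E}$ at $t$ is $\operatorname{rank}\rho_{t}$. The submanifold $\sigma$ is of degree $d$ if the ruling distribution $\mathcal{D}_{t}=\operatorname{Span}(X_{j}(t))_{j=1}^{m-1}$ has degree $d$ at every $t$. The first normal space $N^{1}_{p}\sigma$ at a regular point $p$ is the linear span of the image of the second fundamental form of $\sigma$ at $p$ (a subspace of the normal space). *)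

From HB Require Import structures.
From mathcomp Require Import all_boot all_order all_algebra.
From mathcomp Require Import all_classical all_reals all_analysis.
Set Implicit Arguments. Unset Strict Implicit. Unset Printing Implicit Defensive.
Import Order.TTheory GRing.Theory Num.Theory.
Import numFieldNormedType.Exports.
Local Open Scope classical_set_scope.
Local Open Scope ring_scope.

Section RuledDefs.
Variable R : realType.

Definition dotv (N : nat) (u v : 'rV[R]_N) : R := (u *m v^T) 0 0.

Definition open_itv (a b : \bar R) : set R :=
  [set t : R | (a < t%:E)%E /\ (t%:E < b)%E].

Definition smooth_on (N : nat) (I : set R) (f : R -> 'rV[R]_N) : Prop :=
  forall (k : nat) (t : R), I t -> derivable (iter k (@derive1 _ _) f) t 1.

(* Orthogonal projection onto the orthogonal complement of the row space of A
   (the standard formula  v - v B^T (B B^T)^{-1} B  with B = row_base A). *)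
Definition perp_proj (p N : nat) (A : 'M[R]_(p, N)) (v : 'rV[R]_N) : 'rV[R]_N :=
  let B := row_base A in v - v *m B^T *m invmx (B *m B^T) *m B.

Definition rulings (k N : nat) (X : 'I_k -> R -> 'rV[R]_N) (t : R) : 'M[R]_(k, N) :=
  \matrix_(j < k) X j t.

(* rho_t : D_t -> D_t^perp,  v = sum_j a_j X_j(t)  |->  pi^perp (d/dt sum_j a_j X_j)
   (section with constant coefficients); its image is spanned by the
   pi^perp(X_j'(t)), and the degree is the rank of rho_t. *)
Definition rho_image (k N : nat) (X : 'I_k -> R -> 'rV[R]_N) (t : R) : 'M[R]_(k, N) :=
  \matrix_(j < k) perp_proj (rulings X t) (derive1 (X j) t).

Definition degree_at (k N : nat) (X : 'I_k -> R -> 'rV[R]_N) (t : R) : nat :=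
  \rank (rho_image X t).

(* Ruled map sigma(t, u) = gamma(t) + sum_j u^j X_j(t); the parameter
   x : 'rV_(k.+1) has t = x 0 0 and u^j = x 0 (lift 0 j). *)
Definition ruled_map (k N : nat) (gamma : R -> 'rV[R]_N)
  (X : 'I_k -> R -> 'rV[R]_N) (x : 'rV[R]_k.+1) : 'rV[R]_N :=
  gamma (x 0 0) + \sum_(j < k) x 0 (lift 0 j) *: X j (x 0 0).

Definition ebasis (m : nat) (i : 'I_m) : 'rV[R]_m := delta_mx 0 i.

(* Jacobian of F at x: rows are the partial derivatives dF/dx_i; d F_x(a) = a *m J. *)
Definition jacobian (m N : nat) (F : 'rV[R]_m -> 'rV[R]_N) (x : 'rV[R]_m)
  : 'M[R]_(m, N) := \matrix_(i < m) ('D_(ebasis i) F x).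

Definition regular_point (m N : nat) (F : 'rV[R]_m -> 'rV[R]_N) (x : 'rV[R]_m) : Prop :=
  row_free (jacobian F x).

Definition sff_coef (m N : nat) (F : 'rV[R]_m -> 'rV[R]_N) (x : 'rV[R]_m)
  (i j : 'I_m) : 'rV[R]_N :=
  perp_proj (jacobian F x) ('D_(ebasis i) ('D_(ebasis j) F) x).

Definition sff (m N : nat) (F : 'rV[R]_m -> 'rV[R]_N) (x : 'rV[R]_m)
  (a b : 'rV[R]_m) : 'rV[R]_N :=
  \sum_(i < m) \sum_(j < m) (a 0 i * b 0 j) *: sff_coef F x i j.

(* First normal space: linear span of the image of the (bilinear) second
   fundamental form, i.e. the span of the II(e_i, e_j). *)
Definition first_normal_space (m N : nat) (F : 'rV[R]_m -> 'rV[R]_N) (x : 'rV[R]_m)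
  : 'M[R]_N :=
  (\sum_(i < m) \sum_(j < m) <<sff_coef F x i j>>)%MS.

End RuledDefs.

From Pilot Require Import Defs.
From HB Require Import structures.
From mathcomp Require Import all_boot all_order all_algebra.
From mathcomp Require Import all_classical all_reals all_analysis.
Import Order.TTheory GRing.Theory Num.Theory.
Import numFieldNormedType.Exports.
Local Open Scope classical_set_scope.
Local Open Scope ring_scope.
Set Implicit Arguments. Unset Strict Implicit.

(* The partial derivatives of sigma(t, u) = gamma(t) + sum_j u^j X_j(t) are
   sigma_t = gamma' + sum_j u^j X_j' and sigma_{u^j} = X_j, so the second
   derivatives are sigma_{u^i u^j} = 0, sigma_{t u^j} = X_j' and sigma_tt.
   Hence, with T the tangent space, N^1 lies between pi_T^perp(span X_j') and
   that space plus the line through pi_T^perp(sigma_tt).  Since T contains the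
   ruling space D and has dimension at most dim D + 1, projecting
   pi_D^perp(span X_j') (of dimension d) further onto T^perp loses at most one
   dimension, whence d - 1 <= dim N^1 <= d + 1. *)

Section PerpProjection.
Variable R : realFieldType.

Lemma mulmx_tr_eq0 p N (M : 'M[R]_(p, N)) : M *m M^T = 0 -> M = 0.
Proof.
move=> MMt0; apply/matrixP => i j; rewrite [RHS]mxE.
have : (M *m M^T) i i = 0 by rewrite MMt0 mxE.
rewrite mxE => /psumr_eq0P sq0.
have : M i j * M^T j i = 0 by apply: sq0 => // l _; rewrite mxE -expr2 sqr_ge0.
by rewrite mxE -expr2 => /eqP; rewrite sqrf_eq0 => /eqP.
Qed.

Lemma gram_unitmx p N (B : 'M[R]_(p, N)) : row_free B -> B *m B^T \in unitmx.
Proof.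
move=> freeB; rewrite -row_free_unit -kermx_eq0; apply/eqP.
set K := kermx _.
have KBBt : K *m (B *m B^T) = 0 by apply/eqP; rewrite -sub_kermx.
have : (K *m B) *m (K *m B)^T = 0 by rewrite trmx_mul mulmxA -(mulmxA K) KBBt mul0mx.
by move=> /mulmx_tr_eq0 /eqP; rewrite mulmx_free_eq0 // => /eqP.
Qed.

Definition perp_mx p N (A : 'M[R]_(p, N)) : 'M[R]_N :=
  let B := row_base A in 1%:M - B^T *m invmx (B *m B^T) *m B.

Lemma sub_perp_mx0 p q N (A : 'M[R]_(p, N)) (U : 'M[R]_(q, N)) :
  (U <= A)%MS -> U *m perp_mx A = 0.
Proof.
rewrite -(eq_row_base A) => /submxP [c ->].
rewrite /perp_mx; move: (row_base_free A); move: (row_base A) => B freeB.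
rewrite mulmxBr mulmx1 !mulmxA -(mulmxA c B B^T) -(mulmxA c (B *m B^T)).
by rewrite mulmxV ?gram_unitmx // mulmx1 subrr.
Qed.

Lemma perp_mx_orth p q N (A : 'M[R]_(p, N)) (U : 'M[R]_(q, N)) :
  U *m perp_mx A *m A^T = 0.
Proof.
have /submxP [c Ac] : (A <= row_base A)%MS by rewrite eq_row_base.
suff UPB0 : U *m perp_mx A *m (row_base A)^T = 0.
  by rewrite [in A^T]Ac trmx_mul mulmxA UPB0 mul0mx.
rewrite /perp_mx; move: (row_base_free A); move: (row_base A) => B freeB.
rewrite -mulmxA mulmxBl mul1mx -!mulmxA.
by rewrite mulVmx ?gram_unitmx // mulmx1 subrr mulmx0.
Qed.

Lemma sub_perp_mx_compl p q N (A : 'M[R]_(p, N)) (U : 'M[R]_(q, N)) :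
  (U - U *m perp_mx A <= A)%MS.
Proof.
rewrite /perp_mx mulmxBr mulmx1 opprB addrC subrK -(eq_row_base A) mulmxA.
exact: submxMl.
Qed.

Lemma kermx_perp_mx p N (A : 'M[R]_(p, N)) : (kermx (perp_mx A) <= A)%MS.
Proof.
have KP0 : kermx (perp_mx A) *m perp_mx A = 0 by apply/eqP; rewrite -sub_kermx.
by have := sub_perp_mx_compl A (kermx (perp_mx A)); rewrite KP0 subr0.
Qed.

Section Nested.
Variables (p q r N : nat) (D : 'M[R]_(p, N)) (T : 'M[R]_(q, N)) (W : 'M[R]_(r, N)).
Hypothesis DT : (D <= T)%MS.

Lemma perp_mx_comp : W *m perp_mx T = W *m perp_mx D *m perp_mx T.
Proof.
apply/eqP; rewrite -subr_eq0 -mulmxBl; apply/eqP/sub_perp_mx0.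
exact: submx_trans (sub_perp_mx_compl _ _) DT.
Qed.

Lemma capmx_perp_mx : (W *m perp_mx D :&: D)%MS = 0.
Proof.
set Z := (_ :&: _)%MS.
have /submxP [a Za] : (Z <= W *m perp_mx D)%MS by rewrite capmxSl.
have /submxP [c Zc] : (Z <= D)%MS by rewrite capmxSr.
apply: mulmx_tr_eq0; rewrite {1}Za Zc trmx_mul !mulmxA.
by rewrite (perp_mx_orth D (a *m W)) mul0mx.
Qed.

Lemma mxrank_cap_perp_mx :
  (\rank (W *m perp_mx D :&: T) <= \rank T - \rank D)%N.
Proof.
set S := (_ :&: T)%MS.
have SD0 : (S :&: D)%MS = 0.
  by apply/eqP; rewrite -submx0 -capmx_perp_mx capmxS ?capmxSl.
have : (\rank (S + D) <= \rank T)%N by rewrite mxrankS // addsmx_sub capmxSr DT.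
by rewrite (mxrank_disjoint_sum SD0) leq_subRL ?mxrankS // addnC.
Qed.

Lemma mxrank_perp_mx_le : (\rank (W *m perp_mx T) <= \rank (W *m perp_mx D))%N.
Proof. by rewrite perp_mx_comp mxrankM_maxl. Qed.

Lemma mxrank_perp_mx_ge :
  (\rank (W *m perp_mx D) - (\rank T - \rank D) <= \rank (W *m perp_mx T))%N.
Proof.
rewrite perp_mx_comp -(mxrank_mul_ker (W *m perp_mx D) (perp_mx T)) leq_subLR.
rewrite addnC leq_add2r; apply: leq_trans mxrank_cap_perp_mx.
by rewrite mxrankS // capmxS // kermx_perp_mx.
Qed.

End Nested.

Lemma mxrank_sandwich_row p q N (P : 'M[R]_(p, N)) (M : 'M[R]_(q, N)) (v : 'rV[R]_N) :
  (P <= M)%MS -> (M <= P + v)%MS -> (\rank P <= \rank M <= (\rank P).+1)%N.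
Proof.
move=> PM MPv; rewrite mxrankS //=; apply: leq_trans (mxrankS MPv) _.
apply: leq_trans (mxrank_adds_leqif _ _) _.
by rewrite -[X in (_ <= X)%N]addn1 leq_add2l rank_leq_row.
Qed.

Lemma mxrank_orthonormal k N (D : 'M[R]_(k, N)) : D *m D^T = 1%:M -> \rank D = k.
Proof.
move=> DDt; apply/eqP; rewrite eqn_leq rank_leq_row /=.
by rewrite -{1}(mxrank1 R k) -DDt mxrankM_maxl.
Qed.

End PerpProjection.

Lemma perp_projE (R : realType) p N (A : 'M[R]_(p, N)) v :
  perp_proj A v = v *m perp_mx A.
Proof. by rewrite /perp_proj /perp_mx mulmxBr mulmx1 !mulmxA. Qed.

Section PartialDerivatives.
Variable R : realType.

Lemma derive_affine (V W : normedModType R) (F : V -> W) y v c :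
  (forall h, F (h *: v + y) - F y = h *: c) -> 'D_v F y = c.
Proof.
move=> Fline; rewrite /derive.
rewrite (_ : (fun h => _) = fun h : R => h^-1 *: (h *: c)); last first.
  by apply: funext => h /=; rewrite Fline.
apply: lim_near_cst; first exact: norm_hausdorff.
near=> h; rewrite scalerA mulVf ?scale1r //.
near: h; exact: nbhs_dnbhs_neq.
Unshelve. all: by end_near. Qed.

Lemma derive1_cvg (W : normedModType R) (f : R -> W) t : derivable f t 1 ->
  (fun h => h^-1 *: (f (h + t) - f t)) @ 0^' --> derive1 f t.
Proof.
rewrite derive1E; have -> : (fun h : R => h^-1 *: (f (h + t) - f t)) =
    (fun h => h^-1 *: (f (h *: 1 + t) - f t)).
  by apply: funext => h; rewrite [h *: 1]mulr1.
exact.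
Qed.

Lemma ebasisE m (i l : 'I_m) (h : R) (y : 'rV[R]_m) :
  (h *: ebasis R i + y) 0 l = h * (l == i)%:R + y 0 l.
Proof. by rewrite !mxE eqxx. Qed.

Lemma ebasis_shift_eq m (i : 'I_m) (h : R) (y : 'rV[R]_m) :
  (h *: ebasis R i + y) 0 i = h + y 0 i.
Proof. by rewrite ebasisE eqxx mulr1. Qed.

Lemma ebasis_shift_neq m (i l : 'I_m) (h : R) (y : 'rV[R]_m) :
  l != i -> (h *: ebasis R i + y) 0 l = y 0 l.
Proof. by move=> /negbTE li; rewrite ebasisE li mulr0 add0r. Qed.

Variables (m : nat) (W : normedModType R) (f : R -> W) (x : 'rV[R]_m.+1).

Lemma derive_comp_coord0_e0 :
  'D_(ebasis R 0) (fun y : 'rV[R]_m.+1 => f (y 0 0)) x = derive1 f (x 0 0).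
Proof.
rewrite /derive /derive1.
rewrite (_ : (fun h => _) = fun h : R => h^-1 *: (f (h + x 0 0) - f (x 0 0))) //.
by apply: funext => h /=; rewrite ebasis_shift_eq.
Qed.

Lemma derive_comp_coord0_lift j :
  'D_(ebasis R (lift 0 j)) (fun y : 'rV[R]_m.+1 => f (y 0 0)) x = 0.
Proof.
apply: derive_affine => h.
by rewrite ebasis_shift_neq ?neq_lift // subrr scaler0.
Qed.

End PartialDerivatives.

Section RuledMap.
Variables (R : realType) (k N : nat).
Variables (gamma : R -> 'rV[R]_N) (X : 'I_k -> R -> 'rV[R]_N).
Local Notation F := (ruled_map gamma X).
Local Notation e := (ebasis R).

Definition drulings (t : R) : 'M[R]_(k, N) := \matrix_(j < k) derive1 (X j) t.

Lemma rho_imageE t : rho_image X t = drulings t *m perp_mx (rulings X t).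
Proof. by apply/row_matrixP => j; rewrite row_mul !rowK perp_projE. Qed.

Lemma derive_ruled_map_ruling (y : 'rV[R]_k.+1) j :
  'D_(e (lift 0 j)) F y = X j (y 0 0).
Proof.
apply: derive_affine => h; rewrite /ruled_map ebasis_shift_neq 1?eq_sym ?neq_lift //.
under eq_bigr do rewrite ebasisE (inj_eq (@lift_inj _ 0)) scalerDl.
rewrite big_split /= addrCA addrK (bigD1 j) //= eqxx mulr1 big1 ?addr0 //.
by move=> l /negbTE ->; rewrite mulr0 scale0r.
Qed.

Lemma derive_ruled_map_time (y : 'rV[R]_k.+1) :
  derivable gamma (y 0 0) 1 -> (forall l, derivable (X l) (y 0 0) 1) ->
  'D_(e 0) F y =
  derive1 gamma (y 0 0) + \sum_(l < k) y 0 (lift 0 l) *: derive1 (X l) (y 0 0).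
Proof.
move=> dgamma dX; set t := y 0 0; rewrite /derive.
rewrite (_ : (fun h => _) = fun h : R => h^-1 *: (gamma (h + t) - gamma t) +
   \sum_(l < k) y 0 (lift 0 l) *: (h^-1 *: (X l (h + t) - X l t))); last first.
  apply: funext => h /=; rewrite /ruled_map ebasis_shift_eq.
  rewrite (eq_bigr (fun l => y 0 (lift 0 l) *: X l (h + t))); last first.
    by move=> l _; rewrite ebasis_shift_neq // eq_sym neq_lift.
  rewrite opprD addrACA -sumrB scalerDr scaler_sumr; congr (_ + _).
  by apply: eq_bigr => l _; rewrite -scalerBr !scalerA mulrC.
apply: cvg_lim; first exact: norm_hausdorff.
apply: cvgD; first exact: derive1_cvg.
apply: cvg_big; first exact: add_continuous.
by move=> l _; apply: cvgZ; [exact: cvg_cst | exact: derive1_cvg].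
Qed.

Variable x : 'rV[R]_k.+1.
Let t := x 0 0.
Let T := Defs.jacobian F x.

Lemma rulings_sub_jacobian : (rulings X t <= T)%MS.
Proof.
apply/row_subP => j; rewrite rowK.
have -> : X j t = row (lift 0 j) T by rewrite rowK derive_ruled_map_ruling.
exact: row_sub.
Qed.

Lemma sff_coef_ruling_ruling i j : sff_coef F x (lift 0 i) (lift 0 j) = 0.
Proof.
rewrite /sff_coef (_ : 'D_(e (lift 0 j)) F = fun y => X j (y 0 0)).
  by rewrite derive_comp_coord0_lift /perp_proj !mul0mx subrr.
by apply: funext => y; rewrite derive_ruled_map_ruling.
Qed.

Lemma sff_coef_time_ruling j :
  sff_coef F x 0 (lift 0 j) = row j (drulings t *m perp_mx T).
Proof.
rewrite /sff_coef (_ : 'D_(e (lift 0 j)) F = fun y => X j (y 0 0)).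
  by rewrite derive_comp_coord0_e0 perp_projE row_mul rowK.
by apply: funext => y; rewrite derive_ruled_map_ruling.
Qed.

Hypotheses (dgamma : derivable gamma t 1) (dX : forall l, derivable (X l) t 1).

Lemma sff_coef_ruling_time j :
  sff_coef F x (lift 0 j) 0 = row j (drulings t *m perp_mx T).
Proof.
rewrite /sff_coef (derive_affine (c := derive1 (X j) t)); last first.
  move=> h; rewrite !derive_ruled_map_time ?ebasis_shift_neq ?neq_lift //.
  rewrite opprD addrACA subrr add0r -sumrB.
  under eq_bigr do rewrite -scalerBl ebasisE (inj_eq (@lift_inj _ 0)) addrK.
  rewrite (bigD1 j) //= eqxx mulr1 big1 ?addr0 //.
  by move=> l /negbTE ->; rewrite mulr0 scale0r.
by rewrite perp_projE row_mul rowK.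
Qed.

Lemma first_normal_space_ruled_ge :
  (drulings t *m perp_mx T <= first_normal_space F x)%MS.
Proof.
apply/row_subP => j; rewrite -sff_coef_time_ruling.
apply: (sumsmx_sup 0) => //; apply: (sumsmx_sup (lift 0 j)) => //.
by rewrite genmxE.
Qed.

Lemma first_normal_space_ruled_le :
  (first_normal_space F x <= drulings t *m perp_mx T + sff_coef F x 0 0)%MS.
Proof.
apply/sumsmx_subP => i _; apply/sumsmx_subP => j _; rewrite genmxE.
case: (unliftP 0 i) => [i'|] ->; case: (unliftP 0 j) => [j'|] ->.
- by rewrite sff_coef_ruling_ruling sub0mx.
- by rewrite sff_coef_ruling_time (submx_trans (row_sub _ _)) ?addsmxSl.
- by rewrite sff_coef_time_ruling (submx_trans (row_sub _ _)) ?addsmxSl.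
- exact: addsmxSr.
Qed.

End RuledMap.

Lemma rulings_orthonormal (R : realType) k N (X : 'I_k -> R -> 'rV[R]_N) t :
  (forall i j, dotv (X i t) (X j t) = (i == j)%:R) ->
  rulings X t *m (rulings X t)^T = 1%:M.
Proof.
move=> orth; apply/matrixP => i j; rewrite mxE [RHS]mxE -orth /dotv mxE.
by apply: eq_bigr => l _; rewrite !mxE.
Qed.

Theorem mainTheorem3 (R : realType) (k n : nat) (a b : \bar R)
  (gamma : R -> 'rV[R]_(k.+1 + n)) (X : 'I_k -> R -> 'rV[R]_(k.+1 + n)) (d : nat) :
  (a < b)%E ->
  smooth_on (open_itv a b) gamma ->
  (forall t, open_itv a b t -> dotv (derive1 gamma t) (derive1 gamma t) = 1) ->
  (forall j, smooth_on (open_itv a b) (X j)) ->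
  (forall t, open_itv a b t -> forall i j, dotv (X i t) (X j t) = (i == j)%:R) ->
  (forall t, open_itv a b t -> degree_at X t = d) ->
  forall x : 'rV[R]_k.+1, open_itv a b (x 0 0) ->
  regular_point (ruled_map gamma X) x ->
  (d.-1 <= \rank (first_normal_space (ruled_map gamma X) x) <= d.+1)%N.
Proof.
move=> _ sgamma _ sX orth deg x xI _.
set t := x 0 0 in xI *.
set T := Defs.jacobian (ruled_map gamma X) x.
set D := rulings X t.
have DT : (D <= T)%MS := rulings_sub_jacobian gamma X x.
have rankD : \rank D = k by apply/mxrank_orthonormal/rulings_orthonormal/orth.
have /andP [lo hi] := mxrank_sandwich_row (first_normal_space_ruled_ge gamma X x)
  (first_normal_space_ruled_le (sgamma 0%N t xI) (fun l => sX l 0%N t xI)).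
have le := mxrank_perp_mx_le (drulings X t) DT.
have ge := mxrank_perp_mx_ge (drulings X t) DT.
have codim1 : (\rank T - \rank D <= 1)%N by rewrite rankD leq_subLR addn1 rank_leq_row.
rewrite -(deg t xI) /degree_at rho_imageE -/D -subn1; apply/andP; split.
- exact: leq_trans (leq_sub2l _ codim1) (leq_trans ge lo).
- by rewrite (leq_trans hi) ?ltnS.
Qed.
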